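(* Let $\Omega$ be a properly convex domain in $\mathbb{P}(V)$, $V \cong \mathbb{R}^d$, let $\Gamma$ be a subgroup of $\mathrm{Aut}(\Omega)$, and let $\Lambda$ be any closed $\Gamma$-invariant subset of $\partial\Omega$ whose convex hull in $\Omega$ is nonempty. If $E_+$ and $E_-$ are attracting and repelling subspaces for some divergent sequence $\{\gamma_n\} \subset \Gamma$, then $\mathbb{P}(E_+)$ and $\mathbb{P}(E_-)$ are supporting subspaces of $\Omega$ which both intersect $\Lambda$ nontrivially.
   Context: A properly convex domain is an open subset $\Omega$ of projective space whose closure lies in some affine chart and is convex there; $\mathrm{Aut}(\Omega)$ is the subgroup of $\mathrm{PGL}(V)$ preserving $\Omega$. A sequence in $\mathrm{PGL}(V)$ is divergent if it leaves every compact subset. For a divergent sequence $g_n$, nontrivial linear subspaces $E_+, E_-$ of $V$ with $\dim E_+ + \dim E_- = d$ are called attracting and repelling subspaces for $g_n$ if there is a subsequence $h_n$ of $g_n$ such that for every compact $K \subset \mathbb{P}(V) - \mathbb{P}(E_-)$, the sets $h_n\cdot K$ converge to a subset of $\mathbb{P}(E_+)$ (every divergent sequence admits such subspaces). A projective subspace $W$ is a supporting subspace of $\Omega$ if $W \cap \Omega = \emptyset$ and $W \cap \overline{\Omega} \neq \emptyset$. *)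

(* V = 'rV[R]_d (row vectors), R : realType.
   A subset of P(V) is represented by its cone: a set of NONZERO vectors
   closed under nonzero scalar multiplication ("pcone").
   Linear subspaces of V are represented by matrices E : 'M_d via their
   row space ((v <= E)%MS); P(E) = nonzero vectors of E.
   Elements of PGL(V) are represented by invertible matrices g, acting by
   v |-> v *m g. *)
From HB Require Import structures.
From mathcomp Require Import all_boot all_order all_algebra.
From mathcomp Require Import all_classical all_reals all_analysis.
Set Implicit Arguments. Unset Strict Implicit. Unset Printing Implicit Defensive.
Import Order.TTheory GRing.Theory Num.Theory.
Import numFieldNormedType.Exports.
Local Open Scope classical_set_scope.
Local Open Scope ring_scope.

(* projective convergence: [x n] --> [p] in P(V) (quotient topology) *)
Definition proj_cvg (R : realType) (d : nat) (x : nat -> 'rV[R]_d) (p : 'rV[R]_d)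
  : Prop :=
  p != 0 /\ exists c : nat -> R, (fun n => c n *: x n) @ \oo --> p.

Definition pcone (R : realType) (d : nat) (S : set 'rV[R]_d) : Prop :=
  forall v, S v -> v != 0 /\ forall c : R, c != 0 -> S (c *: v).

Definition pclosure (R : realType) (d : nat) (S : set 'rV[R]_d) (v : 'rV[R]_d)
  : Prop :=
  v != 0 /\ exists x : nat -> 'rV[R]_d, (forall n, S (x n)) /\ proj_cvg x v.

Definition pboundary (R : realType) (d : nat) (S : set 'rV[R]_d) (v : 'rV[R]_d)
  : Prop := pclosure S v /\ ~ S v.

Definition pclosed (R : realType) (d : nat) (S : set 'rV[R]_d) : Prop :=
  forall (x : nat -> 'rV[R]_d) p, (forall n, S (x n)) -> proj_cvg x p -> S p.

(* compact subset of P(V) (P(V) is metrizable: sequential compactness) *)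
Definition pcompact (R : realType) (d : nat) (K : set 'rV[R]_d) : Prop :=
  forall x : nat -> 'rV[R]_d, (forall n, K (x n)) ->
  exists sigma : nat -> nat, (forall n, (sigma n < sigma n.+1)%N) /\
    exists p, K p /\ proj_cvg (x \o sigma) p.

Definition lin_fun (R : realType) (d : nat) (f : 'cV[R]_d) (v : 'rV[R]_d) : R :=
  (v *m f) ord0 ord0.

(* the affine chart {f <> 0} contains the closure of Omega and Omega is
   convex in this chart *)
Definition chart_convex (R : realType) (d : nat) (Om : set 'rV[R]_d)
  (f : 'cV[R]_d) : Prop :=
  f != 0 /\
  (forall v, pclosure Om v -> lin_fun f v != 0) /\
  (forall v w (t : R), Om v -> Om w -> lin_fun f v = 1 -> lin_fun f w = 1 ->
     0 <= t <= 1 -> Om (t *: v + (1 - t) *: w)).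

Definition properly_convex_domain (R : realType) (d : nat) (Om : set 'rV[R]_d)
  : Prop :=
  pcone Om /\ open Om /\ Om !=set0 /\ exists f, chart_convex Om f.

(* Gam (preimage in GL(V)) is a subgroup of Aut(Om) *)
Definition aut_subgroup (R : realType) (d : nat) (Om : set 'rV[R]_d)
  (Gam : set 'M[R]_d) : Prop :=
  Gam 1%:M /\
  (forall g h, Gam g -> Gam h -> Gam (g *m h)) /\
  (forall g, Gam g ->
     [/\ g \in unitmx, Gam (invmx g) & forall v, Om (v *m g) <-> Om v]).

Definition divergent (R : realType) (d : nat) (gam : nat -> 'M[R]_d) : Prop :=
  forall (sigma : nat -> nat), (forall n, (sigma n < sigma n.+1)%N) ->
  forall (c : nat -> R) (g : 'M[R]_d), g \in unitmx ->
    ~ ((fun n => c n *: gam (sigma n)) @ \oo --> g).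

Definition act_set (R : realType) (d : nat) (K : set 'rV[R]_d) (g : 'M[R]_d)
  : set 'rV[R]_d := fun w => exists v, K v /\ w = v *m g.

Definition klim_inf (R : realType) (d : nat) (A : nat -> set 'rV[R]_d)
  (p : 'rV[R]_d) : Prop :=
  exists x : nat -> 'rV[R]_d,
    (exists N, forall n, (N <= n)%N -> A n (x n)) /\ proj_cvg x p.
Definition klim_sup (R : realType) (d : nat) (A : nat -> set 'rV[R]_d)
  (p : 'rV[R]_d) : Prop :=
  exists tau : nat -> nat, (forall k, (tau k < tau k.+1)%N) /\
  exists x : nat -> 'rV[R]_d, (forall k, A (tau k) (x k)) /\ proj_cvg x p.

(* the sets A n converge (Hausdorff = Kuratowski, P(V) compact metric)
   to a subset L of P(E) *)
Definition sets_converge_into (R : realType) (d : nat) (A : nat -> set 'rV[R]_d)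
  (E : 'M[R]_d) : Prop :=
  exists L : set 'rV[R]_d,
    (forall v, v != 0 -> L v -> (v <= E)%MS) /\
    (forall v, v != 0 -> (L v <-> klim_inf A v)) /\
    (forall v, v != 0 -> (L v <-> klim_sup A v)).

Definition attracting_repelling (R : realType) (d : nat) (gam : nat -> 'M[R]_d)
  (Ep Em : 'M[R]_d) : Prop :=
  (0 < \rank Ep)%N /\ (0 < \rank Em)%N /\ (\rank Ep + \rank Em)%N = d /\
  exists sigma : nat -> nat, (forall n, (sigma n < sigma n.+1)%N) /\
  forall K : set 'rV[R]_d, pcone K -> pcompact K ->
    (forall v, K v -> ~ (v <= Em)%MS) ->
    sets_converge_into (fun n => act_set K (gam (sigma n))) Ep.

Definition supporting (R : realType) (d : nat) (Om : set 'rV[R]_d)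
  (E : 'M[R]_d) : Prop :=
  (forall v, (v <= E)%MS -> ~ Om v) /\
  exists v, (v <= E)%MS /\ pclosure Om v.

Definition conv_hull (R : realType) (d : nat) (f : 'cV[R]_d)
  (Lam : set 'rV[R]_d) (v : 'rV[R]_d) : Prop :=
  exists (n : nat) (lam : 'I_n -> 'rV[R]_d) (t : 'I_n -> R),
    (forall i, Lam (lam i) /\ lin_fun f (lam i) = 1) /\
    (forall i, 0 <= t i) /\ \sum_i t i = 1 /\ v = \sum_i t i *: lam i.

From mathcomp Require Import all_boot all_order all_algebra.
From mathcomp Require Import all_classical all_reals all_analysis.
From mathcomp.algebra_tactics Require Import ring lra.
From mathcomp Require Import zify.
Import Order.TTheory GRing.Theory Num.Theory.
Import numFieldNormedType.Exports.
Local Open Scope classical_set_scope.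
Local Open Scope ring_scope.

(* Pass to the subsequence h_n of gamma_n given by [attracting_repelling]: it
   sends sequences converging in P(V) off P(E-) to sequences accumulating in
   P(E+), and the h_n^-1 do the same with E+ and E- exchanged.
   If q in Omega lay in P(E-), a dimension count gives u_n in span(q) + E-^c
   with u_n h_n in a complement Y of E+; their limit cannot lie off P(E-), so
   it is q.  Perturbing by +-w, with w small and off E-, gives two sequences in
   Omega converging off P(E-); as h_n preserves Omega their images have chart
   values of the same sign, and normalised by the sum of these values they
   converge into E+ while their sum stays in Y with chart value 1,
   contradicting E+ /\ Y = 0.  Finally a point of the convex hull of Lambda
   lies in Omega, hence some point of Lambda lies off P(E-), and its h_n-orbit
   accumulates on a point of Lambda in P(E+), which lies in the closure of
   Omega. *)

Lemma leq_homo_ltn {phi : nat -> nat} : {homo phi : m n / (m < n)%N} ->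
  forall n, (n <= phi n)%N.
Proof. by move=> phi_incr; elim=> // n IHn; exact: leq_ltn_trans IHn (phi_incr _ _ _). Qed.

Lemma ltn_addr_homo (N : nat) : {homo addn^~ N : i j / (i < j)%N}.
Proof. by move=> i j; rewrite ltn_add2r. Qed.

Lemma cvg_subseq {T : topologicalType} {u : nat -> T} {l : T} {phi : nat -> nat} :
  {homo phi : m n / (m < n)%N} -> u @ \oo --> l -> u \o phi @ \oo --> l.
Proof.
move=> phi_incr; apply: cvg_comp; apply/cvgnyPge => N.
by near=> n; apply: (leq_trans _ (leq_homo_ltn phi_incr n)); near: n; exists N.
Unshelve. all: by end_near. Qed.

Lemma homo_increasing_seq (phi : nat -> nat) :
  increasing_seq phi -> {homo phi : m n / (m < n)%N}.
Proof. by move=> /increasing_seqP phi_incr; apply: homo_ltn => // n m p /ltn_trans; apply. Qed.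

Lemma ler_norm_addr_same_sign {R : realDomainType} {x y : R} :
  0 < x * y -> `|x| <= `|x + y|.
Proof.
have [x_gt0|x_le0] := ltP 0 x => xy.
  have y_gt0 : 0 < y by rewrite -(pmulr_rgt0 _ x_gt0).
  by rewrite (gtr0_norm x_gt0) gtr0_norm; lra.
have x_lt0 : x < 0.
  by rewrite lt_neqAle x_le0 andbT; apply: contraTneq xy => ->; rewrite mul0r ltxx.
have y_lt0 : y < 0 by rewrite -(nmulr_rgt0 _ x_lt0).
by rewrite (ltr0_norm x_lt0) ltr0_norm; lra.
Qed.

Section MatrixSequences.
Context {R : realType}.

Lemma ler_norm_mxentry {m n : nat} (x : 'M[R]_(m, n)) i j : `|x i j| <= `|x|.
Proof. by rewrite [leRHS]/Num.Def.normr /= mx_normrE; apply/bigmax_geP; right; exists (i, j). Qed.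

Lemma cvg_mxentries {T : Type} {F : set_system T} {FF : Filter F} {m n : nat}
    (u : T -> 'M[R]_(m, n)) (l : 'M[R]_(m, n)) :
  (forall i j, (fun t => u t i j) @ F --> l i j) -> u @ F --> l.
Proof.
move=> ul; apply/cvgrPdist_lt => e e0.
have : \forall t \near F, forall ij : 'I_m * 'I_n, `|l ij.1 ij.2 - u t ij.1 ij.2| < e.
  by apply: filter_forall => -[i j]; exact: (cvgrPdist_lt _ _).1 (ul i j) e e0.
apply: filterS => t ul_t.
have : ball l e (u t) by split=> // i j; rewrite -ball_normE; exact: (ul_t (i, j)).
by rewrite -ball_normE.
Qed.

Lemma cvg_mulmxr {T : Type} {F : set_system T} {FF : Filter F} {m n p : nat}
    {u : T -> 'M[R]_(m, n)} {l : 'M[R]_(m, n)} (M : 'M[R]_(n, p)) :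
  u @ F --> l -> (fun t => u t *m M) @ F --> l *m M.
Proof.
move=> ul; apply: cvg_mxentries => i j; rewrite mxE.
under eq_cvg do rewrite mxE.
apply: cvg_big => [|k _]; first exact: add_continuous.
by apply: cvgMl; exact: (cvg_comp _ _ ul (@coord_continuous _ _ _ i k l)).
Qed.

Lemma mulmxr_continuous {m n p : nat} (M : 'M[R]_(n, p)) :
  continuous (fun x : 'M[R]_(m, n) => x *m M).
Proof. by move=> x; exact: (@cvg_mulmxr _ (nbhs x) _ m n p id x M cvg_id). Qed.

Lemma closed_submx {m n k : nat} (E : 'M[R]_(k, n)) :
  closed [set v : 'M[R]_(m, n) | (v <= E)%MS].
Proof.
rewrite (_ : [set v | _] = (fun v => v *m cokermx E) @^-1` [set 0]).
  apply: preimage_closed => [v _|]; first exact: mulmxr_continuous.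
  exact/accessible_closed_set1/hausdorff_accessible/norm_hausdorff.
by apply/seteqP; split=> v /=; rewrite submxE => /eqP.
Qed.

Lemma cvg_submx {m n k : nat} {u : nat -> 'M[R]_(m, n)} {l : 'M[R]_(m, n)}
    (E : 'M[R]_(k, n)) :
  (forall j, (u j <= E)%MS) -> u @ \oo --> l -> (l <= E)%MS.
Proof. by move=> uE; apply: (closed_cvg _ (closed_submx E)); exact: nearW. Qed.

Lemma near_nsubmx {m n k : nat} {E : 'M[R]_(k, n)} {p : 'M[R]_(m, n)} :
  ~~ (p <= E)%MS -> \forall v \near p, ~~ (v <= E)%MS.
Proof.
move=> pE; have E_open : open (~` [set v : 'M[R]_(m, n) | (v <= E)%MS]).
  by rewrite openC; exact: closed_submx.
by apply: filterS (open_nbhs_nbhs (conj E_open (elimN idP pE))) => v /negP.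
Qed.

Lemma bounded_mx_subseq_cvg {m n : nat} (u : nat -> 'M[R]_(m, n)) (M : R) :
  (forall k, `|u k| <= M) ->
  exists2 phi : nat -> nat, {homo phi : i j / (i < j)%N} & cvgn (u \o phi).
Proof.
move=> uM.
suff [phi phi_incr u_phi] : exists2 phi : nat -> nat, {homo phi : i j / (i < j)%N} &
    forall ij : 'I_m * 'I_n, cvgn (fun k => u (phi k) ij.1 ij.2).
  exists phi => //; apply/cvg_ex.
  exists (\matrix_(i, j) lim ((fun k => u (phi k) i j) @ \oo)).
  by apply: cvg_mxentries => i j; rewrite mxE; exact: (u_phi (i, j)).
suff [phi phi_incr u_phi] : exists2 phi : nat -> nat, {homo phi : i j / (i < j)%N} &
    forall ij, ij \in enum {: 'I_m * 'I_n} -> cvgn (fun k => u (phi k) ij.1 ij.2).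
  by exists phi => // ij; apply: u_phi; rewrite mem_enum.
elim: (enum _) => [|ij s [phi phi_incr u_phi]]; first by exists id.
have u_ij_bounded : bounded_fun (fun k => u (phi k) ij.1 ij.2).
  exists M; split; first exact: num_real.
  by move=> x Mx k _; apply: le_trans (ler_norm_mxentry _ _ _) (le_trans (uM _) (ltW Mx)).
have [psi /homo_increasing_seq psi_incr u_ij_cvg] := bolzano_weierstrass u_ij_bounded.
exists (phi \o psi) => [i j ij_lt|ij']; first exact/phi_incr/psi_incr.
rewrite inE => /predU1P [->|/u_phi/cvg_ex [l u_l]]; first exact: u_ij_cvg.
by apply/cvg_ex; exists l; exact: (cvg_subseq psi_incr u_l).
Qed.

Lemma bounded_mx_subseq_cvg2 {m n : nat} (u v : nat -> 'M[R]_(m, n)) (M : R) :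
  (forall k, `|u k| <= M) -> (forall k, `|v k| <= M) ->
  exists2 phi : nat -> nat, {homo phi : i j / (i < j)%N} &
    cvgn (u \o phi) /\ cvgn (v \o phi).
Proof.
move=> uM vM; have [phi phi_incr /cvg_ex [l ul]] := bounded_mx_subseq_cvg u M uM.
have [psi psi_incr v_psi] := bounded_mx_subseq_cvg (v \o phi) M (fun k => vM _).
exists (phi \o psi) => [i j ij|]; first exact/phi_incr/psi_incr.
by split=> //; apply/cvg_ex; exists l; exact: cvg_subseq psi_incr ul.
Qed.

End MatrixSequences.

Section RowSpaces.
Context {F : fieldType} {n : nat}.

Lemma nsubmx_neq0 {m k : nat} {v : 'M[F]_(m, n)} {E : 'M[F]_(k, n)} :
  ~~ (v <= E)%MS -> v != 0.
Proof. by apply: contraNneq => ->; exact: sub0mx. Qed.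

Lemma submx_addl {q w : 'rV[F]_n} {E : 'M[F]_n} :
  (q <= E)%MS -> ((q + w)%R <= E)%MS = (w <= E)%MS.
Proof.
move=> qE; apply/idP/idP => [qwE|wE]; last exact: addmx_sub.
by rewrite -(addKr q w) addmx_sub // eqmx_opp.
Qed.

Lemma exists_row_mulmx_cap (g : 'M[F]_n) {m1 m2 : nat} (U : 'M[F]_(m1, n))
    (Y : 'M[F]_(m2, n)) :
  g \in unitmx -> (n < \rank U + \rank Y)%N ->
  exists u : 'rV[F]_n, [/\ u != 0, (u <= U)%MS & (u *m g <= Y)%MS].
Proof.
move=> g_unit rUY.
have : (U *m g :&: Y)%MS != 0.
  apply: contraTneq rUY => cap0; rewrite -leqNgt.
  have := mxrank_sum_cap (U *m g) Y; rewrite cap0 mxrank0 addn0 mxrankMfree ?row_free_unit //.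
  by move=> <-; exact: rank_leq_col.
move=> /rowV0Pn [y]; rewrite sub_capmx => /andP [yUg yY] y0.
exists (y *m invmx g); split.
- by apply: contraNneq y0 => yg0; rewrite -(mulmxKV g_unit y) yg0 mul0mx.
- by have := submxMr (invmx g) yUg; rewrite mulmxK.
- by rewrite mulmxKV.
Qed.

Lemma mxrank_adds_row (q : 'rV[F]_n) {m : nat} (W : 'M[F]_(m, n)) :
  q != 0 -> (q :&: W)%MS = 0 -> \rank (q + W)%MS = (\rank W).+1.
Proof. by move=> q0 qW; have := mxrank_sum_cap q W; rewrite qW mxrank0 addn0 rank_rV q0. Qed.

Lemma addsmx_compl_line {q p : 'rV[F]_n} {E : 'M[F]_n} :
  (q <= E)%MS -> (p <= q + E^C)%MS -> (p <= E)%MS -> exists s : F, p = s *: q.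
Proof.
move=> qE /sub_addsmxP [[a b] /= p_ab] pE.
have bE : (b *m E^C <= E)%MS.
  have -> : b *m E^C%MS = p - a *m q by rewrite p_ab addrC addKr.
  by rewrite addmx_sub ?eqmx_opp // (submx_trans (submxMl _ _) qE).
have b0 : b *m E^C%MS = 0.
  by apply/eqP; rewrite -submx0 -(capmx_compl E) sub_capmx bE submxMl.
by exists (a 0 0); rewrite p_ab b0 addr0 {1}(mx11_scalar a) mul_scalar_mx.
Qed.

End RowSpaces.

Section ProjectiveConvergence.
Context {R : realType} {d : nat}.
Implicit Types (x : nat -> 'rV[R]_d) (p : 'rV[R]_d) (E : 'M[R]_d).

Lemma cvg_proj_cvg {x p} : p != 0 -> x @ \oo --> p -> proj_cvg x p.
Proof. by move=> p0 xp; split=> //; exists (fun=> 1); under eq_fun do rewrite scale1r. Qed.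

Lemma proj_cvg_cst {p} : p != 0 -> proj_cvg (fun=> p) p.
Proof. by move=> p0; apply: cvg_proj_cvg p0 _; exact: cvg_cst. Qed.

Lemma proj_cvg_subseq {x p} {phi : nat -> nat} :
  {homo phi : m n / (m < n)%N} -> proj_cvg x p -> proj_cvg (x \o phi) p.
Proof. by move=> phi_incr [p0 [c xp]]; split=> //; exists (c \o phi); exact: cvg_subseq xp. Qed.

Lemma proj_cvg_submx {x p} E : (forall j, (x j <= E)%MS) -> proj_cvg x p -> (p <= E)%MS.
Proof. by move=> xE [_ [c xp]]; apply: cvg_submx xp => j; exact: scalemx_sub. Qed.

Lemma unit_subseq_cvg {u : nat -> 'rV[R]_d} : (forall j, `|u j| = 1) ->
  exists2 phi : nat -> nat, {homo phi : m n / (m < n)%N} &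
  exists2 l, `|l| = 1 & u \o phi @ \oo --> l.
Proof.
move=> u1; have [|phi phi_incr /cvg_ex [l ul]] := bounded_mx_subseq_cvg u 1.
  by move=> j; rewrite u1.
exists phi => //; exists l => //.
have sphere_closed : closed (Num.norm @^-1` [set 1] : set 'rV[R]_d).
  by apply: preimage_closed => [v _|]; [exact: norm_continuous|exact: closed_eq].
by apply: (closed_cvg _ sphere_closed _ _ ul); apply: nearW => j; exact: u1.
Qed.

Lemma proj_subseq_cvg {x} : (forall j, x j != 0) ->
  exists2 phi : nat -> nat, {homo phi : m n / (m < n)%N} & exists p, proj_cvg (x \o phi) p.
Proof.
move=> x0; pose u j := `|x j|^-1 *: x j.
have u1 j : `|u j| = 1 by rewrite normrZ normfV normr_id mulVf // normr_eq0.
have [phi phi_incr [l l1 ul]] := unit_subseq_cvg u1.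
exists phi => //; exists l; split; first by rewrite -normr_eq0 l1 oner_neq0.
by exists (fun j => `|x (phi j)|^-1).
Qed.

End ProjectiveConvergence.

Section AffineChart.
Context {R : realType} {d : nat}.

Lemma lin_funD (f : 'cV[R]_d) (v w : 'rV[R]_d) :
  lin_fun f (v + w) = lin_fun f v + lin_fun f w.
Proof. by rewrite /lin_fun mulmxDl mxE. Qed.

Lemma lin_funB (f : 'cV[R]_d) (v w : 'rV[R]_d) :
  lin_fun f (v - w) = lin_fun f v - lin_fun f w.
Proof. by rewrite /lin_fun mulmxBl !mxE. Qed.

Lemma lin_funZ (f : 'cV[R]_d) (c : R) (v : 'rV[R]_d) :
  lin_fun f (c *: v) = c * lin_fun f v.
Proof. by rewrite /lin_fun -scalemxAl mxE. Qed.

Lemma lin_fun_cvg (f : 'cV[R]_d) {u : nat -> 'rV[R]_d} {l : 'rV[R]_d} :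
  u @ \oo --> l -> (fun j => lin_fun f (u j)) @ \oo --> lin_fun f l.
Proof.
by move=> ul; exact: (cvg_comp _ _ (cvg_mulmxr f ul) (@coord_continuous _ _ _ ord0 ord0 _)).
Qed.

Context {Om : set 'rV[R]_d} {f : 'cV[R]_d}.
Hypotheses (Om_cone : pcone Om) (Om_chart : chart_convex Om f).

Lemma lin_fun_neq0 {v} : Om v -> lin_fun f v != 0.
Proof.
move=> Ov; have v0 := (Om_cone v Ov).1; apply: Om_chart.2.1; split=> //.
by exists (fun=> v); split=> //; exact: proj_cvg_cst.
Qed.

Lemma Om_conic_comb a b (l m : R) : Om a -> Om b ->
  0 < lin_fun f a * lin_fun f b -> 0 < l -> 0 < m -> Om (l *: a + m *: b).
Proof.
wlog fa_gt0 : a b / 0 < lin_fun f a => [Hwlog Oa Ob fab l0 m0|].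
  have [fa_gt0|fa_le0] := ltP 0 (lin_fun f a); first exact: Hwlog.
  have N1_neq0 : (-1 : R) != 0 by rewrite oppr_eq0 oner_eq0.
  have fNa_gt0 : 0 < lin_fun f (-1 *: a).
    by rewrite lin_funZ mulN1r oppr_gt0 lt_neqAle fa_le0 lin_fun_neq0.
  have fNab : 0 < lin_fun f (-1 *: a) * lin_fun f (-1 *: b).
    by rewrite !lin_funZ !mulN1r mulrNN.
  have /(Om_cone _) [_ /(_ _ N1_neq0)] := Hwlog _ _ fNa_gt0
    ((Om_cone a Oa).2 _ N1_neq0) ((Om_cone b Ob).2 _ N1_neq0) fNab l0 m0.
  by rewrite !scaleN1r !scalerN -opprD opprK.
move=> Oa Ob fab l0 m0.
set A := lin_fun f a in fa_gt0 fab; set B := lin_fun f b in fab.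
have fb_gt0 : 0 < B by rewrite -(pmulr_rgt0 _ fa_gt0).
have A0 : A != 0 by rewrite gt_eqF.
have B0 : B != 0 by rewrite gt_eqF.
set S := l * A + m * B; have S_gt0 : 0 < S by rewrite addr_gt0 ?mulr_gt0.
have S0 : S != 0 by rewrite gt_eqF.
set t := l * A / S.
have t01 : 0 <= t <= 1.
  rewrite /t divr_ge0 ?(ltW S_gt0) ?mulr_ge0 ?(ltW l0) ?(ltW fa_gt0) //=.
  by rewrite ler_pdivrMr // mul1r lerDl mulr_ge0 // ltW.
have Oa1 : Om (A^-1 *: a) by exact: (Om_cone a Oa).2 _ (invr_neq0 A0).
have Ob1 : Om (B^-1 *: b) by exact: (Om_cone b Ob).2 _ (invr_neq0 B0).
have := Om_chart.2.2 _ _ t Oa1 Ob1 _ _ t01; rewrite !lin_funZ !mulVf // => /(_ erefl erefl).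
move=> /(Om_cone _) [_ /(_ S S0)]; rewrite scalerDr !scalerA.
have -> : S * t * A^-1 = l by rewrite /t; field; rewrite A0 S0.
by have -> : S * (1 - t) * B^-1 = m by rewrite /t /S; field; rewrite B0 -/S S0.
Qed.

Lemma aut_lin_fun_same_sign {g : 'M[R]_d} {a b : 'rV[R]_d} :
  (forall v, Om (v *m g) <-> Om v) -> Om a -> Om b ->
  0 < lin_fun f a * lin_fun f b -> 0 < lin_fun f (a *m g) * lin_fun f (b *m g).
Proof.
move=> g_aut Oa Ob fab.
have ag0 := lin_fun_neq0 (proj2 (g_aut a) Oa).
have bg0 := lin_fun_neq0 (proj2 (g_aut b) Ob).
set al := lin_fun f (a *m g) in ag0 *; set be := lin_fun f (b *m g) in bg0 *.
rewrite ltNge; apply/negP => albe_le0.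
(* Otherwise the point |be| a + |al| b of Om would be mapped to chart value 0. *)
have : Om ((`|be| *: a + `|al| *: b) *m g).
  by apply/g_aut/Om_conic_comb; rewrite ?normr_gt0.
move=> /lin_fun_neq0; rewrite mulmxDl -!scalemxAl lin_funD !lin_funZ -/al -/be.
have [al_gt0|al_le0] := ltP 0 al.
  have be_lt0 : be < 0 by rewrite lt_neqAle bg0 -(pmulr_rle0 _ al_gt0).
  by rewrite (gtr0_norm al_gt0) (ltr0_norm be_lt0) mulNr mulrC addNr eqxx.
have al_lt0 : al < 0 by rewrite lt_neqAle ag0.
have be_gt0 : 0 < be by rewrite lt_neqAle eq_sym bg0 -(nmulr_rle0 _ al_lt0).
by rewrite (ltr0_norm al_lt0) (gtr0_norm be_gt0) mulNr mulrC addrN eqxx.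
Qed.

Lemma ball_lin_fun_same_sign {q : 'rV[R]_d} {e : R} :
  (forall v, `|v - q| < e -> Om v) ->
  forall {v}, `|v - q| < e -> 0 < lin_fun f q * lin_fun f v.
Proof.
move=> ball_Om v vq.
have Oq : Om q by apply: ball_Om; rewrite subrr normr0 (le_lt_trans _ vq).
have q0 := lin_fun_neq0 Oq; have v0 := lin_fun_neq0 (ball_Om _ vq).
set A := lin_fun f q in q0 *; set B := lin_fun f v in v0 *.
rewrite ltNge; apply/negP => AB_le0.
have AAB_gt0 : 0 < A * (A - B).
  by rewrite mulrBr subr_gt0 (le_lt_trans AB_le0) // lt0r mulf_neq0 //= -expr2 sqr_ge0.
have AB0 : A - B != 0 by apply: contraTneq AAB_gt0 => ->; rewrite mulr0 ltxx.
set t := A / (A - B).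
have t01 : 0 <= t <= 1.
  have -> : t = A * A / (A * (A - B)) by rewrite /t invfM mulrA mulfK.
  apply/andP; split; first by apply: divr_ge0; [rewrite -expr2 sqr_ge0|exact: ltW].
  by rewrite ler_pdivrMr // mul1r mulrBr; nra.
have /lin_fun_neq0 : Om (q + t *: (v - q)).
  apply: ball_Om; rewrite addrC addKr normrZ ger0_norm ?(andP t01).1 //.
  by apply: le_lt_trans vq; rewrite ler_piMl // (andP t01).2.
rewrite lin_funD lin_funZ lin_funB -/A -/B /t.
have -> : A + A / (A - B) * (B - A) = 0 by field.
by rewrite eqxx.
Qed.

Lemma Om_norm_le : exists2 M : R, 0 < M & forall v, Om v -> `|v| <= M * `|lin_fun f v|.
Proof.
(* A violating sequence, normalised, accumulates on a point of the closure of
   Om with chart value 0. *)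
apply: contrapT => noM.
have /choice [v v_spec] : forall k, exists v, Om v /\ k.+1%:R * `|lin_fun f v| < `|v|.
  move=> k; apply: contrapT => nok; apply: noM; exists k.+1%:R => // v Ov.
  by rewrite leNgt; apply/negP => vk; apply: nok; exists v.
have v0 k : v k != 0 := (Om_cone _ (v_spec k).1).1.
pose u k := `|v k|^-1 *: v k.
have u1 k : `|u k| = 1 by rewrite normrZ normfV normr_id mulVf // normr_eq0.
have fu k : `|lin_fun f (u k)| < k.+1%:R^-1.
  rewrite lin_funZ normrM normfV normr_id mulrC ltr_pdivrMr ?normr_gt0 //.
  by rewrite ltr_pdivlMl ?ltr0Sn //; exact: (v_spec k).2.
have [phi phi_incr [l l1 ul]] := unit_subseq_cvg u1.
have l0 : l != 0 by rewrite -normr_eq0 l1 oner_neq0.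
have /(Om_chart.2.1 l) : pclosure Om l.
  split=> //; exists (u \o phi); split; last exact: cvg_proj_cvg.
  by move=> k; apply: (Om_cone _ (v_spec _).1).2; rewrite invr_eq0 normr_eq0.
apply/negP; rewrite negbK; apply/eqP/(cvg_unique (@Rhausdorff R) (lin_fun_cvg f ul)).
apply/cvgr0Pnorm_lt => e e_gt0; near=> k.
apply: (lt_le_trans (fu (phi k))); apply: (le_trans (_ : _ <= k.+1%:R^-1)).
  by rewrite lef_pV2 ?posrE ?ltr0Sn // ler_nat ltnS leq_homo_ltn.
by apply: ltW; near: k; exact: near_infty_natSinv_lt (PosNum e_gt0).
Unshelve. all: by end_near. Qed.

Lemma Om_pair_normalized_le (M : R) {a b : 'rV[R]_d} :
  (forall v, Om v -> `|v| <= M * `|lin_fun f v|) -> Om a -> Om b ->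
  0 < lin_fun f a * lin_fun f b ->
  let N := lin_fun f a + lin_fun f b in
  [/\ N != 0, `|N^-1 *: a| <= M & `|N^-1 *: b| <= M].
Proof.
move=> OmM Oa Ob fab N.
have aN : `|lin_fun f a| <= `|N| := ler_norm_addr_same_sign fab.
have bN : `|lin_fun f b| <= `|N|.
  by rewrite /N addrC; apply: ler_norm_addr_same_sign; rewrite mulrC.
have fa_gt0 : 0 < `|lin_fun f a| by rewrite normr_gt0 lin_fun_neq0.
have N_gt0 : 0 < `|N| := lt_le_trans fa_gt0 aN.
have M_ge0 : 0 <= M by rewrite -(pmulr_lge0 _ fa_gt0) (le_trans _ (OmM _ Oa)).
have normalized_le v : Om v -> `|lin_fun f v| <= `|N| -> `|N^-1 *: v| <= M.
  move=> Ov vN; rewrite normrZ normfV ler_pdivrMl //; apply: (le_trans (OmM _ Ov)).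
  by rewrite mulrC ler_wpM2r.
by split; [rewrite -normr_gt0|exact: normalized_le|exact: normalized_le].
Qed.

End AffineChart.
Section Attraction.
Context {R : realType} {d : nat}.
Implicit Types (h : nat -> 'M[R]_d) (A Rr : 'M[R]_d) (x : nat -> 'rV[R]_d)
  (xinf p l : 'rV[R]_d).

Definition seq_attracting h A Rr : Prop :=
  forall (x : nat -> 'rV[R]_d) (xinf : 'rV[R]_d) (phi : nat -> nat) (p : 'rV[R]_d),
  proj_cvg x xinf -> ~~ (xinf <= Rr)%MS -> {homo phi : m n / (m < n)%N} ->
  proj_cvg (fun j => x j *m h (phi j)) p -> (p <= A)%MS.

Definition cone_ball (p : 'rV[R]_d) (r : R) : set 'rV[R]_d :=
  fun v => v != 0 /\ exists c : R, `|p - c *: v| <= r.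

Lemma cone_ball_pcone p r : pcone (cone_ball p r).
Proof.
move=> v [v0 [c vp]]; split=> // c' c'0; split; first by rewrite scaler_eq0 negb_or c'0.
by exists (c / c'); rewrite scalerA mulfVK.
Qed.

Lemma cone_ball_pcompact {p r} : r < `|p| -> pcompact (cone_ball p r).
Proof.
move=> r_lt_p z Kz.
have /all_sig [c zp] : forall i, {c : R | `|p - c *: z i| <= r}.
  by move=> i; apply/cid; case: (Kz i).
have w_bounded i : `|c i *: z i| <= `|p| + r.
  have -> : c i *: z i = p - (p - c i *: z i) by rewrite opprB addrC subrK.
  by apply: (le_trans (ler_normB _ _)); rewrite lerD2l.
have [phi phi_incr /cvg_ex [l wl]] := bounded_mx_subseq_cvg _ _ w_bounded.
have lp : `|p - l| <= r.
  apply: (closed_cvg _ (@closed_closed_ball_ _ _ p r) _ _ wl).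
  by apply: nearW => j; exact: zp.
have l0 : l != 0.
  by apply: contra_ltN r_lt_p => /eqP l0; move: lp; rewrite l0 subr0.
exists phi; split=> [n|]; first exact: phi_incr.
exists l; split; first by split=> //; exists 1; rewrite scale1r.
by split=> //; exists (c \o phi).
Qed.

Lemma seq_attracting_of_sets_converge {gam : nat -> 'M[R]_d} {sigma : nat -> nat}
    {Ep Em : 'M[R]_d} :
  (forall K : set 'rV[R]_d, pcone K -> pcompact K -> (forall v, K v -> ~ (v <= Em)%MS) ->
    sets_converge_into (fun n => act_set K (gam (sigma n))) Ep) ->
  seq_attracting (gam \o sigma) Ep Em.
Proof.
move=> gam_conv x xinf phi p [xinf0 [c cx]] xinf_Em phi_incr xp.
have /nbhs_ballP [e e_gt0 e_Em] := near_nsubmx xinf_Em.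
pose m := Num.min e `|xinf|; pose r := m / 2.
have m_gt0 : 0 < m by rewrite lt_min e_gt0 normr_gt0.
have r_gt0 : 0 < r by rewrite divr_gt0.
have r_lt_m : r < m by rewrite /r ltr_pdivrMr // ltr_pMr // ltr1n.
have r_lt_xinf : r < `|xinf| by apply: lt_le_trans r_lt_m _; rewrite ge_min lexx orbT.
have r_lt_e : r < e by apply: lt_le_trans r_lt_m _; rewrite ge_min lexx.
pose K := cone_ball xinf r.
have K_Em v : K v -> ~ (v <= Em)%MS.
  move=> [_ [a va]] vEm; have /e_Em : ball xinf e (a *: v).
    by rewrite -ball_normE; exact: le_lt_trans va r_lt_e.
  by rewrite scalemx_sub.
have [N _ xN] := (cvgrPdist_lt _ _).1 cx r r_gt0.
have K_xN k : K (x (k + N)%N).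
  have xr : `|xinf - c (k + N)%N *: x (k + N)%N| < r by apply: xN; rewrite /= leq_addl.
  split; last by exists (c (k + N)%N); exact: ltW.
  apply: contra_ltN r_lt_xinf => /eqP x0.
  by move: xr; rewrite x0 scaler0 subr0 => /ltW.
have [L [L_Ep [_ L_sup]]] := gam_conv K (cone_ball_pcone _ _) (cone_ball_pcompact r_lt_xinf) K_Em.
apply: (L_Ep _ xp.1); apply/(L_sup _ xp.1).
exists (phi \o addn^~ N); split=> [k|]; first exact/phi_incr/ltn_addr_homo.
exists (fun k => x (k + N)%N *m gam (sigma (phi (k + N)%N))); split.
  by move=> k; exists (x (k + N)%N).
exact: (proj_cvg_subseq (ltn_addr_homo N) xp).
Qed.

Lemma seq_attracting_inv {h A Rr} : (forall n, h n \in unitmx) ->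
  seq_attracting h A Rr -> seq_attracting (fun n => invmx (h n)) Rr A.
Proof.
move=> h_unit h_att y yinf phi p y_yinf yinf_A phi_incr yp; apply: contraT => p_Rr.
have : (yinf <= A)%MS.
  apply: (h_att _ _ phi _ yp p_Rr phi_incr).
  by under eq_fun do rewrite mulmxKV //.
by rewrite (negbTE yinf_A).
Qed.

Lemma seq_attracting_cvg {h A Rr x xinf} {phi : nat -> nat} (c : nat -> R) {p} :
  seq_attracting h A Rr -> proj_cvg x xinf -> ~~ (xinf <= Rr)%MS ->
  {homo phi : m n / (m < n)%N} ->
  (fun j => c j *: (x j *m h (phi j))) @ \oo --> p -> (p <= A)%MS.
Proof.
move=> h_att x_xinf xinf_Rr phi_incr xp.
have [->|p0] := eqVneq p 0; first exact: sub0mx.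
by apply: h_att x_xinf xinf_Rr phi_incr _; split=> //; exists c.
Qed.

Lemma seq_attracting_invariant_meets {h A Rr} {Lam : set 'rV[R]_d} {l} :
  pclosed Lam -> (forall n v, Lam v -> Lam (v *m h n)) -> (forall n, h n \in unitmx) ->
  seq_attracting h A Rr -> Lam l -> l != 0 -> ~~ (l <= Rr)%MS ->
  exists p, [/\ p != 0, (p <= A)%MS & Lam p].
Proof.
move=> Lam_closed Lam_inv h_unit h_att Ll l0 l_Rr.
have lh0 k : l *m h k != 0.
  by apply: contraNneq l0 => lh; rewrite -(mulmxK (h_unit k) l) lh mul0mx.
have [phi phi_incr [p lhp]] := proj_subseq_cvg lh0.
exists p; split; first exact: lhp.1.
  exact: (h_att (fun=> l) l phi p (proj_cvg_cst l0) l_Rr phi_incr lhp).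
by apply: Lam_closed lhp => k; exact: Lam_inv.
Qed.

Lemma seq_attracting_limit_repelling {h A Rr} {Y : 'M[R]_d} {phi : nat -> nat} {x p} :
  seq_attracting h A Rr -> (forall n, h n \in unitmx) -> (A :&: Y)%MS = 0 ->
  {homo phi : m n / (m < n)%N} -> (forall k, x k != 0) ->
  (forall k, (x k *m h (phi k) <= Y)%MS) -> proj_cvg x p -> (p <= Rr)%MS.
Proof.
move=> h_att h_unit AY0 phi_incr x0 xY xp; apply: contraT => p_Rr.
have xh0 k : x k *m h (phi k) != 0.
  by apply: contraNneq (x0 k) => xh; rewrite -(mulmxK (h_unit (phi k)) (x k)) xh mul0mx.
have [psi psi_incr [p' xp']] := proj_subseq_cvg xh0.
have p'A : (p' <= A)%MS.
  exact: (h_att _ _ (phi \o psi) _ (proj_cvg_subseq psi_incr xp) p_Rr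
    (fun i j ij => phi_incr _ _ (psi_incr _ _ ij)) xp').
have p'Y : (p' <= Y)%MS by apply: proj_cvg_submx xp' => k; exact: xY.
by move: xp'.1; rewrite -submx0 -AY0 sub_capmx p'A p'Y.
Qed.

End Attraction.

Section RepellingSubspace.
Context {R : realType} {d : nat}.
Context {Om : set 'rV[R]_d} {f : 'cV[R]_d} {h : nat -> 'M[R]_d} {A Rr : 'M[R]_d}.
Hypotheses (Om_cone : pcone Om) (Om_open : open Om) (Om_chart : chart_convex Om f).
Hypotheses (h_aut : forall n v, Om (v *m h n) <-> Om v) (h_att : seq_attracting h A Rr).

(* Normalising both images by the sum N of their chart values keeps them
   bounded, so they converge into A, while the chart value of their sum stays 1. *)
Lemma attracting_pair_absurd {Y : 'M[R]_d} {phi : nat -> nat} {a b : nat -> 'rV[R]_d}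
    {qa qb : 'rV[R]_d} :
  (A :&: Y)%MS = 0 -> {homo phi : m n / (m < n)%N} ->
  (forall k, Om (a k)) -> (forall k, Om (b k)) ->
  (forall k, 0 < lin_fun f (a k) * lin_fun f (b k)) ->
  a @ \oo --> qa -> b @ \oo --> qb -> ~~ (qa <= Rr)%MS -> ~~ (qb <= Rr)%MS ->
  (forall k, ((a k + b k)%R *m h (phi k) <= Y)%MS) -> False.
Proof.
move=> AY0 phi_incr Oa Ob fab a_qa b_qb qa_Rr qb_Rr abY.
pose ag k := a k *m h (phi k); pose bg k := b k *m h (phi k).
pose N k := lin_fun f (ag k) + lin_fun f (bg k).
have [M _ OmM] := Om_norm_le Om_cone Om_chart.
have /all_and3 [N0 agM bgM] k : [/\ N k != 0, `|(N k)^-1 *: ag k| <= M & `|(N k)^-1 *: bg k| <= M].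
  apply: (Om_pair_normalized_le Om_cone Om_chart M OmM); rewrite ?h_aut //.
  exact: (aut_lin_fun_same_sign Om_cone Om_chart (h_aut (phi k)) (Oa k) (Ob k) (fab k)).
have [psi psi_incr [/cvg_ex [As A'_As] /cvg_ex [Bs B'_Bs]]] := bounded_mx_subseq_cvg2 _ _ M agM bgM.
have phi_psi_incr : {homo phi \o psi : i j / (i < j)%N}.
  by move=> i j ij; exact/phi_incr/psi_incr.
have AsA : (As <= A)%MS.
  have := seq_attracting_cvg (fun k => (N (psi k))^-1) h_att
    (cvg_proj_cvg (nsubmx_neq0 qa_Rr) (cvg_subseq psi_incr a_qa)) qa_Rr phi_psi_incr.
  by apply.
have BsA : (Bs <= A)%MS.
  have := seq_attracting_cvg (fun k => (N (psi k))^-1) h_att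
    (cvg_proj_cvg (nsubmx_neq0 qb_Rr) (cvg_subseq psi_incr b_qb)) qb_Rr phi_psi_incr.
  by apply.
have AB_cvg : (fun k => (N (psi k))^-1 *: (ag (psi k) + bg (psi k))) @ \oo --> As + Bs.
  by under eq_fun do rewrite scalerDr; exact: cvgD A'_As B'_Bs.
have AsBsY : ((As + Bs)%R <= Y)%MS.
  by apply: (cvg_submx Y _ AB_cvg) => k; rewrite -mulmxDl scalemx_sub.
have : lin_fun f (As + Bs) = 1.
  apply: (cvg_unique (@Rhausdorff R) (lin_fun_cvg f AB_cvg)) => /=.
  by under eq_fun do rewrite lin_funZ lin_funD mulVf //; exact: cvg_cst.
have -> : As + Bs = 0.
  by apply/eqP; rewrite -submx0 -AY0 sub_capmx addmx_sub // AsBsY.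
by rewrite /lin_fun mul0mx mxE => /esym/eqP; rewrite oner_eq0.
Qed.

(* v (k + N) is the midpoint of v (k + N) +- w', which stay in a ball of Omega
   around q and converge to q +- w', off P(Rr). *)
Lemma attracting_cvg_repelling_point_absurd {Y : 'M[R]_d} {phi : nat -> nat}
    {v : nat -> 'rV[R]_d} {q w : 'rV[R]_d} :
  (A :&: Y)%MS = 0 -> {homo phi : m n / (m < n)%N} -> Om q -> (q <= Rr)%MS ->
  ~~ (w <= Rr)%MS -> v @ \oo --> q -> (forall k, (v k *m h (phi k) <= Y)%MS) -> False.
Proof.
move=> AY0 phi_incr Oq qRr wRr vq vY.
have [e e_gt0 ball_Om] : exists2 e : R, 0 < e & forall x, `|x - q| < e -> Om x.
  have /nbhs_ballP [e e_gt0 eOm] := Om_open q Oq.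
  by exists e => // x xq; apply: eOm; rewrite -ball_normE /= distrC.
have nw0 : `|w| != 0 by rewrite normr_eq0 (nsubmx_neq0 wRr).
have e2_gt0 : 0 < e / 2 by rewrite divr_gt0.
pose w' := (e / 2 / `|w|) *: w.
have w'_norm : `|w'| = e / 2.
  by rewrite normrZ ger0_norm; [field|rewrite !divr_ge0 // ltW].
have w'Rr : ~~ (w' <= Rr)%MS.
  by rewrite eqmx_scale // mulf_neq0 ?invr_neq0 // gt_eqF.
have [N _ vN] := (cvgrPdist_lt _ _).1 vq (e / 2) e2_gt0.
have vN_cvg : (fun k => v (k + N)%N) @ \oo --> q := cvg_subseq (ltn_addr_homo N) vq.
have ball_shift (s : 'rV[R]_d) k : `|s| = e / 2 -> `|v (k + N)%N + s - q| < e.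
  move=> s_norm; rewrite addrAC; apply: (le_lt_trans (ler_normD _ _)).
  by rewrite s_norm distrC; have := vN (k + N)%N (leq_addl _ _); lra.
have w'N : `|- w'| = e / 2 by rewrite normrN.
have fab k : 0 < lin_fun f (v (k + N)%N + w') * lin_fun f (v (k + N)%N - w').
  have := mulr_gt0 (ball_lin_fun_same_sign Om_cone Om_chart ball_Om (ball_shift _ k w'_norm))
    (ball_lin_fun_same_sign Om_cone Om_chart ball_Om (ball_shift _ k w'N)).
  by rewrite mulrACA -expr2 pmulr_rgt0 // exprn_even_gt0 //= (lin_fun_neq0 Om_cone Om_chart Oq).
apply: (@attracting_pair_absurd Y (phi \o addn^~ N) _ _ (q + w') (q - w') AY0 _ _ _ fab).
- by move=> i j ij; exact/phi_incr/ltn_addr_homo.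
- by move=> k; exact: ball_Om (ball_shift _ k w'_norm).
- by move=> k; exact: ball_Om (ball_shift _ k w'N).
- exact: cvgD vN_cvg (cvg_cst w').
- exact: cvgB vN_cvg (cvg_cst w').
- by rewrite submx_addl.
- by rewrite submx_addl // eqmx_opp.
- by move=> k; rewrite addrACA subrr addr0 mulmxDl addmx_sub.
Qed.

Lemma seq_attracting_repelling_disjoint : (forall n, h n \in unitmx) ->
  (\rank A + \rank Rr)%N = d -> (0 < \rank A)%N -> forall q, (q <= Rr)%MS -> ~ Om q.
Proof.
move=> h_unit rk rA q qRr Oq.
pose W := (Rr^C)%MS; pose U := (q + W)%MS; pose Y := (A^C)%MS.
have rW : \rank W = \rank A by rewrite mxrank_compl; lia.
have qW0 : (q :&: W)%MS = 0.
  by apply/eqP; rewrite -submx0 -(capmx_compl Rr) capmxS.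
have rUY : (d < \rank U + \rank Y)%N.
  rewrite mxrank_adds_row ?(Om_cone q Oq).1 // rW mxrank_compl.
  by have := rank_leq_col A; lia.
have /all_sig [u u_spec] n : {u : 'rV[R]_d | [/\ u != 0, (u <= U)%MS & (u *m h n <= Y)%MS]}.
  by apply/cid; exact: exists_row_mulmx_cap.
have u0 n : u n != 0 by case: (u_spec n).
have uY n : (u n *m h n <= Y)%MS by case: (u_spec n).
have [phi phi_incr [p up]] := proj_subseq_cvg u0.
have pU : (p <= U)%MS by apply: proj_cvg_submx up => k; case: (u_spec (phi k)).
have pRr : (p <= Rr)%MS.
  exact: (seq_attracting_limit_repelling h_att h_unit (capmx_compl A) phi_incr
    (x := u \o phi) (fun k => u0 (phi k)) (fun k => uY (phi k)) up).
have [s ps] := addsmx_compl_line qRr pU pRr.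
have s0 : s != 0 by apply: contraNneq up.1 => s0; rewrite ps s0 scale0r.
case: up => _ [c cu].
have [w wW w0] : exists2 w : 'rV[R]_d, (w <= W)%MS & w != 0.
  by apply/rowV0Pn; rewrite -mxrank_eq0 rW -lt0n.
have wRr : ~~ (w <= Rr)%MS.
  by apply: contra w0 => wR; rewrite -submx0 -(capmx_compl Rr) sub_capmx wR.
apply: (attracting_cvg_repelling_point_absurd (capmx_compl A) phi_incr Oq qRr wRr
  (v := fun k => s^-1 *: (c k *: u (phi k)))).
  by rewrite -[q](scalerK s0) -ps; exact: cvgZ (cvg_cst _) cu.
by move=> k; rewrite -!scalemxAl !scalemx_sub.
Qed.

End RepellingSubspace.

Lemma conv_hull_submx {R : realType} {d : nat} (f : 'cV[R]_d) {Lam : set 'rV[R]_d}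
    {E : 'M[R]_d} {v : 'rV[R]_d} :
  (forall l, Lam l -> (l <= E)%MS) -> conv_hull f Lam v -> (v <= E)%MS.
Proof.
move=> LamE [n [lam [t [lam_spec [_ [_ ->]]]]]].
by apply: summx_sub => i _; apply/scalemx_sub/LamE; exact: (lam_spec i).1.
Qed.

Lemma attracting_meets_limit_set {R : realType} {d : nat} {Om Lam : set 'rV[R]_d}
    {Gam : set 'M[R]_d} {f : 'cV[R]_d} {v0 : 'rV[R]_d} {g : nat -> 'M[R]_d}
    {A Rr : 'M[R]_d} :
  aut_subgroup Om Gam -> pcone Lam -> pclosed Lam ->
  (forall g v, Gam g -> Lam v -> Lam (v *m g)) -> Om v0 -> conv_hull f Lam v0 ->
  (forall n, Gam (g n)) -> seq_attracting g A Rr -> (forall q, (q <= Rr)%MS -> ~ Om q) ->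
  exists p, [/\ p != 0, (p <= A)%MS & Lam p].
Proof.
move=> [_ [_ Gam_aut]] Lam_cone Lam_closed Lam_inv Ov0 v0_hull g_Gam g_att Rr_out.
have [l [Ll lRr]] : exists l, Lam l /\ ~~ (l <= Rr)%MS.
  apply: contrapT => Lam_Rr; apply: (Rr_out v0) => //; apply: conv_hull_submx v0_hull => l Ll.
  by apply: contrapT => lRr; apply: Lam_Rr; exists l; split=> //; apply/negP.
apply: (seq_attracting_invariant_meets Lam_closed _ _ g_att Ll (Lam_cone l Ll).1 lRr).
- by move=> n v; exact: Lam_inv (g_Gam n).
- by move=> n; case: (Gam_aut _ (g_Gam n)).
Qed.

Theorem mainTheorem6 (R : realType) (d : nat) (Om Lam : set 'rV[R]_d)
  (Gam : set 'M[R]_d) (gam : nat -> 'M[R]_d) (Ep Em : 'M[R]_d) :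
  properly_convex_domain Om ->
  aut_subgroup Om Gam ->
  pcone Lam -> pclosed Lam ->
  (forall g v, Gam g -> Lam v -> Lam (v *m g)) ->
  (forall v, Lam v -> pboundary Om v) ->
  (exists f, chart_convex Om f /\ exists v, Om v /\ conv_hull f Lam v) ->
  (forall n, Gam (gam n)) ->
  divergent gam ->
  attracting_repelling gam Ep Em ->
  [/\ supporting Om Ep, supporting Om Em,
      (exists v, [/\ v != 0, (v <= Ep)%MS & Lam v]) &
      (exists v, [/\ v != 0, (v <= Em)%MS & Lam v])].
Proof.
move=> [Om_cone [Om_open [_ [f Om_chart]]]] Gam_sub Lam_cone Lam_closed Lam_inv Lam_bd
  [f' [_ [v0 [Ov0 v0_hull]]]] gam_Gam _ [rEp [rEm [rk [sigma [_ gam_conv]]]]].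
have [_ [_ Gam_aut]] := Gam_sub.
have Gam_unit g : Gam g -> g \in unitmx by case/Gam_aut.
have Gam_Om g : Gam g -> forall v, Om (v *m g) <-> Om v by case/Gam_aut.
have h_Gam n : Gam (gam (sigma n)) := gam_Gam (sigma n).
have hV_Gam n : Gam (invmx (gam (sigma n))) by case: (Gam_aut _ (h_Gam n)).
have att := seq_attracting_of_sets_converge gam_conv.
have att_inv := seq_attracting_inv (fun n => Gam_unit _ (h_Gam n)) att.
have Em_out := seq_attracting_repelling_disjoint Om_cone Om_open Om_chart
  (fun n => Gam_Om _ (h_Gam n)) att (fun n => Gam_unit _ (h_Gam n)) rk rEp.
have Ep_out := seq_attracting_repelling_disjoint Om_cone Om_open Om_chart
  (fun n => Gam_Om _ (hV_Gam n)) att_inv (fun n => Gam_unit _ (hV_Gam n))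
  (etrans (addnC _ _) rk) rEm.
have [p [p0 pEp Lp]] := attracting_meets_limit_set Gam_sub Lam_cone Lam_closed Lam_inv
  Ov0 v0_hull h_Gam att Em_out.
have [p' [p'0 p'Em Lp']] := attracting_meets_limit_set Gam_sub Lam_cone Lam_closed Lam_inv
  Ov0 v0_hull hV_Gam att_inv Ep_out.
split; [split=> //; exists p|split=> //; exists p'|by exists p|by exists p'];
  by split=> //; exact: (Lam_bd _ _).1.
Qed.
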